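(* Let $i\in\{1,2\}$ and let $(X,e_X,\mu_X)$ and $(Y,e_Y,\mu_Y)$ be H-equivalent $\mathrm{NP}_i$-digital H-spaces. If $(X,e_X,\mu_X)$ is homotopy-associative, then $(Y,e_Y,\mu_Y)$ is homotopy-associative.
   Context: A digital image is a finite set $X\subset\mathbb{Z}^n$ with a reflexive symmetric adjacency relation (a finite reflexive graph); continuous maps send adjacent points to adjacent points. On products, $\mathrm{NP}_u$ declares two tuples adjacent iff coordinates are adjacent in at most $u$ positions and equal elsewhere. An $\mathrm{NP}_i$-homotopy from $f$ to $g:X\to Y$ is an $\mathrm{NP}_i$-continuous $H:X\times[0,m]_{\mathbb{Z}}\to Y$ with $H(\cdot,0)=f$, $H(\cdot,m)=g$; write $f\simeq_i g$ (products in the domain carry $\mathrm{NP}_i$). $(f,g)(x)=(f(x),g(x))$, $(f\times g)(x,y)=(f(x),g(y))$; $c_e$ is the constant map at $e$. An $\mathrm{NP}_i$-digital H-space is $(X,e,\mu)$ with $\mu:X\times X\to X$ $\mathrm{NP}_i$-continuous, $\mu\circ(\mathrm{id}_X,c_e)\simeq_i\mathrm{id}_X$, $\mu\circ(c_e,\mathrm{id}_X)\simeq_i\mathrm{id}_X$ (homotopies need not be pointed). It is homotopy-associative if $\mu\circ(\mathrm{id}_X\times\mu)\simeq_i\mu\circ(\mu\times\mathrm{id}_X)$ as maps $X\times X\times X\to X$. Two H-spaces $(X,e_X,\mu_X)$, $(Y,e_Y,\mu_Y)$ are H-equivalent if there are continuous pointed maps $f:(X,e_X)\to(Y,e_Y)$,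 $g:(Y,e_Y)\to(X,e_X)$ with $f\circ g\simeq_i\mathrm{id}_Y$, $g\circ f\simeq_i\mathrm{id}_X$, $f\circ\mu_X\simeq_i\mu_Y\circ(f\times f)$, $g\circ\mu_Y\simeq_i\mu_X\circ(g\times g)$. *)

From mathcomp Require Import all_boot.
Set Implicit Arguments. Unset Strict Implicit. Unset Printing Implicit Defensive.

Record dimage := DImage {
  dcar :> finType;
  dadj : rel dcar;
  dadj_refl : reflexive dadj;
  dadj_sym : symmetric dadj }.

(* The digital interval [0,m]_Z with c_1 adjacency (|s - t| <= 1). *)
Definition iadj (m : nat) : rel 'I_m.+1 := fun s t => (s <= t.+1) && (t <= s.+1).
Lemma iadj_refl m : reflexive (@iadj m).
Proof. by move=> s; rewrite /iadj leqnSn. Qed.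
Lemma iadj_sym m : symmetric (@iadj m).
Proof. by move=> s t; rewrite /iadj andbC. Qed.
Definition dint (m : nat) : dimage := DImage (@iadj_refl m) (@iadj_sym m).

Definition cont1 (A B : dimage) (f : A -> B) :=
  forall a a', dadj a a' -> dadj (f a) (f a').

(* NP_u adjacency on products with 2, 3, 4 factors: all coordinates adjacent
   (adjacency being reflexive) and at most u coordinates different. *)
Definition np2 (u : nat) (A B : dimage) (a a' : A) (b b' : B) :=
  [&& dadj a a', dadj b b' & (a != a') + (b != b') <= u].
Definition np3 (u : nat) (A B C : dimage) (a a' : A) (b b' : B) (c c' : C) :=
  [&& dadj a a', dadj b b', dadj c c' & (a != a') + (b != b') + (c != c') <= u].
Definition np4 (u : nat) (A B C D : dimage) (a a' : A) (b b' : B) (c c' : C)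
  (d d' : D) :=
  [&& dadj a a', dadj b b', dadj c c', dadj d d' &
      (a != a') + (b != b') + (c != c') + (d != d') <= u].

(* NP_u-continuity of maps out of products (maps written in curried form). *)
Definition cont2 (u : nat) (A B E : dimage) (f : A -> B -> E) :=
  forall a a' b b', np2 u a a' b b' -> dadj (f a b) (f a' b').
Definition cont3 (u : nat) (A B C E : dimage) (f : A -> B -> C -> E) :=
  forall a a' b b' c c', np3 u a a' b b' c c' -> dadj (f a b c) (f a' b' c').
Definition cont4 (u : nat) (A B C D E : dimage) (f : A -> B -> C -> D -> E) :=
  forall a a' b b' c c' d d', np4 u a a' b b' c c' d d' ->
    dadj (f a b c d) (f a' b' c' d').

Definition homotopic1 (u : nat) (X Y : dimage) (f g : X -> Y) :=
  exists m (H : X -> dint m -> Y),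
    cont2 u H /\ (forall x, H x ord0 = f x) /\ (forall x, H x ord_max = g x).
Definition homotopic2 (u : nat) (X X' Y : dimage) (f g : X -> X' -> Y) :=
  exists m (H : X -> X' -> dint m -> Y),
    cont3 u H /\ (forall x x', H x x' ord0 = f x x')
              /\ (forall x x', H x x' ord_max = g x x').
Definition homotopic3 (u : nat) (X1 X2 X3 Y : dimage) (f g : X1 -> X2 -> X3 -> Y) :=
  exists m (H : X1 -> X2 -> X3 -> dint m -> Y),
    cont4 u H /\ (forall x y z, H x y z ord0 = f x y z)
              /\ (forall x y z, H x y z ord_max = g x y z).

Definition HSpace (u : nat) (X : dimage) (e : X) (mu : X -> X -> X) :=
  [/\ cont2 u mu,
      homotopic1 u (fun x => mu x e) id &
      homotopic1 u (fun x => mu e x) id].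

Definition hassoc (u : nat) (X : dimage) (mu : X -> X -> X) :=
  homotopic3 u (fun x y z => mu x (mu y z)) (fun x y z => mu (mu x y) z).

Definition HEquiv (u : nat) (X : dimage) (eX : X) (muX : X -> X -> X)
  (Y : dimage) (eY : Y) (muY : Y -> Y -> Y) :=
  exists (f : X -> Y) (g : Y -> X),
    cont1 f /\ cont1 g /\ f eX = eY /\ g eY = eX /\
    homotopic1 u (f \o g) id /\
    homotopic1 u (g \o f) id /\
    homotopic2 u (fun x x' => f (muX x x')) (fun x x' => muY (f x) (f x')) /\
    homotopic2 u (fun y y' => g (muY y y')) (fun y y' => muX (g y) (g y')).

From mathcomp Require Import all_boot zify.

(* Transport the associativity homotopy of X along the H-equivalence:
     muY a (muY b c) ~ f (g (muY a (muY b c))) ~ f (muX (g a) (g (muY b c)))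
       ~ f (muX (g a) (muX (g b) (g c))) ~ f (muX (muX (g a) (g b)) (g c))
       ~ ... ~ muY (muY a b) c,
   using only f g ~ id, g muY ~ muX (g x g) and continuity.  Each step is a
   homotopy composed with continuous maps; such composites stay
   NP_u-continuous because a move changing k coordinates of the input changes
   at most k coordinates of the output.  Nothing depends on the value of u. *)

Set Implicit Arguments. Unset Strict Implicit. Unset Printing Implicit Defensive.

(* [k] is a budget for the number of changed coordinates; budgets of the
   arguments add up under NP_u-continuous maps. *)
Definition adjk (A : dimage) (k : nat) (x x' : A) :=
  dadj x x' && ((x != x') <= k).

Lemma adjk_adj (A : dimage) k (x x' : A) : adjk k x x' -> dadj x x'.
Proof. by case/andP. Qed.

Section ChangedCoordinates.
Variables (A B C D E : eqType).

Lemma neq_app1 (f : A -> E) a a' : (f a != f a') <= (a != a').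
Proof. by case: (eqVneq a a') => [->|_]; rewrite ?eqxx //; case: (_ != _). Qed.

Lemma neq_app2 (F : A -> B -> E) a a' b b' :
  (F a b != F a' b') <= (a != a') + (b != b').
Proof.
by case: (eqVneq a a') => [->|_]; case: (eqVneq b b') => [->|_];
  rewrite ?eqxx //; case: (_ != _).
Qed.

Lemma neq_app3 (F : A -> B -> C -> E) a a' b b' c c' :
  (F a b c != F a' b' c') <= (a != a') + (b != b') + (c != c').
Proof.
by case: (eqVneq a a') => [->|_]; case: (eqVneq b b') => [->|_];
  case: (eqVneq c c') => [->|_]; rewrite ?eqxx //; case: (_ != _).
Qed.

Lemma neq_app4 (F : A -> B -> C -> D -> E) a a' b b' c c' d d' :
  (F a b c d != F a' b' c' d') <= (a != a') + (b != b') + (c != c') + (d != d').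
Proof.
by case: (eqVneq a a') => [->|_]; case: (eqVneq b b') => [->|_];
  case: (eqVneq c c') => [->|_]; case: (eqVneq d d') => [->|_];
  rewrite ?eqxx //; case: (_ != _).
Qed.

End ChangedCoordinates.

Section Budgets.
Variables (u : nat) (A B C D E : dimage).

Lemma adjk_cont1 (f : A -> E) k a a' :
  cont1 f -> adjk k a a' -> adjk k (f a) (f a').
Proof.
move=> cf /andP[aa ka]; rewrite /adjk cf //=.
exact: leq_trans (neq_app1 f a a') ka.
Qed.

Lemma adjk_cont2 (F : A -> B -> E) ka kb a a' b b' :
  cont2 u F -> adjk ka a a' -> adjk kb b b' -> ka + kb <= u ->
  adjk (ka + kb) (F a b) (F a' b').
Proof.
move=> cF /andP[aa ka'] /andP[bb kb'] le_u; have k_le := leq_add ka' kb'.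
rewrite /adjk cF ?(leq_trans (neq_app2 F a a' b b')) //.
by rewrite /np2 aa bb (leq_trans k_le).
Qed.

Lemma adjk_cont3 (F : A -> B -> C -> E) ka kb kc a a' b b' c c' :
  cont3 u F -> adjk ka a a' -> adjk kb b b' -> adjk kc c c' ->
  ka + kb + kc <= u -> adjk (ka + kb + kc) (F a b c) (F a' b' c').
Proof.
move=> cF /andP[aa ka'] /andP[bb kb'] /andP[cc kc'] le_u.
have k_le := leq_add (leq_add ka' kb') kc'.
rewrite /adjk cF ?(leq_trans (neq_app3 F a a' b b' c c')) //.
by rewrite /np3 aa bb cc (leq_trans k_le).
Qed.

Lemma adjk_cont4 (F : A -> B -> C -> D -> E) ka kb kc kd a a' b b' c c' d d' :
  cont4 u F -> adjk ka a a' -> adjk kb b b' -> adjk kc c c' -> adjk kd d d' ->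
  ka + kb + kc + kd <= u ->
  adjk (ka + kb + kc + kd) (F a b c d) (F a' b' c' d').
Proof.
move=> cF /andP[aa ka'] /andP[bb kb'] /andP[cc kc'] /andP[dd kd'] le_u.
have k_le := leq_add (leq_add (leq_add ka' kb') kc') kd'.
rewrite /adjk cF ?(leq_trans (neq_app4 F a a' b b' c c' d d')) //.
by rewrite /np4 aa bb cc dd (leq_trans k_le).
Qed.

Lemma cont3_adjk (F : A -> B -> C -> E) :
  (forall ka kb kc a a' b b' c c',
     adjk ka a a' -> adjk kb b b' -> adjk kc c c' -> ka + kb + kc <= u ->
     dadj (F a b c) (F a' b' c')) ->
  cont3 u F.
Proof.
move=> hF a a' b b' c c' /and4P[aa bb cc le_u].
by apply: hF le_u; rewrite /adjk ?aa ?bb ?cc leqnn.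
Qed.

Lemma cont4_adjk (F : A -> B -> C -> D -> E) :
  (forall ka kb kc kd a a' b b' c c' d d',
     adjk ka a a' -> adjk kb b b' -> adjk kc c c' -> adjk kd d d' ->
     ka + kb + kc + kd <= u -> dadj (F a b c d) (F a' b' c' d')) ->
  cont4 u F.
Proof.
move=> hF a a' b b' c c' d d' /and5P[aa bb cc dd le_u].
by apply: hF le_u; rewrite /adjk ?aa ?bb ?cc ?dd leqnn.
Qed.

End Budgets.

Lemma cont3_comp_r u (A B C D E : dimage) (M : A -> D -> E) (N : B -> C -> D) :
  cont2 u M -> cont2 u N -> cont3 u (fun a b c => M a (N b c)).
Proof.
move=> cM cN; apply: cont3_adjk => ka kb kc a a' b b' c c' aa bb cc le_u.
by apply: adjk_adj (adjk_cont2 cM aa (adjk_cont2 cN bb cc _) _); lia.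
Qed.

Lemma cont3_comp_l u (A B C D E : dimage) (M : D -> C -> E) (N : A -> B -> D) :
  cont2 u M -> cont2 u N -> cont3 u (fun a b c => M (N a b) c).
Proof.
move=> cM cN; apply: cont3_adjk => ka kb kc a a' b b' c c' aa bb cc le_u.
by apply: adjk_adj (adjk_cont2 cM (adjk_cont2 cN aa bb _) cc _); lia.
Qed.

Lemma dint_adj_rev m (s t : dint m) :
  dadj (rev_ord s : dint m) (rev_ord t) = dadj s t.
Proof.
have := ltn_ord s; have := ltn_ord t; rewrite /= /iadj /= => lt_t lt_s.
by apply/andP/andP => -[? ?]; split; lia.
Qed.

Lemma dint_adj_shift m n k (s s' : dint m) (t t' : dint n) :
  t = s + k :> nat -> t' = s' + k :> nat ->
  dadj t t' = dadj s s' /\ (t != t') = (s != s').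
Proof.
move=> ts ts'; split; first by rewrite /= /iadj ts ts' -!addSn !leq_add2r.
by rewrite -!(inj_eq val_inj) /= ts ts' eqn_add2r.
Qed.

Section Homotopic3.
Variables (u : nat) (X1 X2 X3 Y : dimage).
Implicit Types f g h : X1 -> X2 -> X3 -> Y.

Lemma homotopic3_sym f g : homotopic3 u f g -> homotopic3 u g f.
Proof.
move=> [m [H [cH [H0 H1]]]].
exists m, (fun x y z t => H x y z (rev_ord t)); split; [|split].
- move=> a a' b b' c c' t t' abct; apply: cH.
  by move: abct; rewrite /np4 dint_adj_rev (inj_eq rev_ord_inj).
- by move=> x y z; rewrite -H1; congr (H _ _ _ _); apply: val_inj => /=; lia.
- by move=> x y z; rewrite -H0; congr (H _ _ _ _); apply: val_inj => /=; lia.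
Qed.

Lemma homotopic3_trans f g h :
  homotopic3 u f g -> homotopic3 u g h -> homotopic3 u f h.
Proof.
move=> [m1 [H1 [cH1 [H10 H11]]]] [m2 [H2 [cH2 [H20 H21]]]].
pose K x y z (t : dint (m1 + m2)) :=
  if (t : nat) <= m1 then H1 x y z (inord t) else H2 x y z (inord (t - m1)).
have K1 x y z (t : dint (m1 + m2)) :
    t <= m1 -> K x y z t = H1 x y z (inord t).
  by rewrite /K => ->.
(* At the junction time m1 both halves take the value g. *)
have K2 x y z (t : dint (m1 + m2)) :
    m1 <= t -> K x y z t = H2 x y z (inord (t - m1)).
  rewrite /K; case: (leqP t m1) => // le_t le_t'.
  have t_m1 : t = m1 :> nat by lia.
  have -> : inord t = ord_max :> 'I_m1.+1.
    by apply: val_inj; rewrite /= inordK t_m1.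
  have -> : inord (t - m1) = ord0 :> 'I_m2.+1.
    by apply: val_inj; rewrite /= t_m1 subnn inordK.
  by rewrite H11 H20.
exists (m1 + m2), K; split; [|split].
- move=> a a' b b' c c' t t' abct; have /and5P[_ _ _ /andP[tt' t't] _] := abct.
  have lt_t := ltn_ord t; have lt_t' := ltn_ord t'.
  have [[le_t le_t'] | [le_t le_t']] :
      (t <= m1 /\ t' <= m1) \/ (m1 <= t /\ m1 <= t').
    by rewrite /= /iadj in tt' t't; lia.
  + rewrite !K1 //; apply: cH1; move: abct; rewrite /np4.
    by case: (@dint_adj_shift m1 (m1 + m2) 0 (inord t) (inord t') t t')
      => [||-> ->]; rewrite ?inordK //; lia.
  + rewrite !K2 //; apply: cH2; move: abct; rewrite /np4.
    by case: (@dint_adj_shift m2 _ m1 (inord (t - m1)) (inord (t' - m1)) t t')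
      => [||-> ->]; rewrite ?inordK //; lia.
- move=> x y z; rewrite K1 // -H10.
  by congr (H1 _ _ _ _); apply: val_inj; rewrite /= inordK.
- move=> x y z; rewrite K2 /= ?leq_addr // -H21.
  by congr (H2 _ _ _ _); apply: val_inj; rewrite /= inordK; lia.
Qed.

End Homotopic3.

Lemma homotopic1_comp3 u (X1 X2 X3 Y Z : dimage) (F : X1 -> X2 -> X3 -> Y)
    (p q : Y -> Z) :
  cont3 u F -> homotopic1 u p q ->
  homotopic3 u (fun a b c => p (F a b c)) (fun a b c => q (F a b c)).
Proof.
move=> cF [m [H [cH [H0 H1]]]].
exists m, (fun a b c => H (F a b c)); split; [|split] => //.
apply: cont4_adjk => ka kb kc kt a a' b b' c c' t t' aa bb cc tt le_u.
by apply: adjk_adj (adjk_cont2 cH (adjk_cont3 cF aa bb cc _) tt _); lia.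
Qed.

Lemma homotopic3_comp u (X1 X2 X3 Y Z : dimage) (h : Y -> Z)
    (f g : X1 -> X2 -> X3 -> Y) :
  cont1 h -> homotopic3 u f g ->
  homotopic3 u (fun a b c => h (f a b c)) (fun a b c => h (g a b c)).
Proof.
move=> ch [m [H [cH [H0 H1]]]].
exists m, (fun a b c t => h (H a b c t)); split; [|split].
- by move=> a a' b b' c c' t t' /cH /ch.
- by move=> a b c; rewrite H0.
- by move=> a b c; rewrite H1.
Qed.

Lemma homotopic3_precomp u (X1 X2 X3 W1 W2 W3 Y : dimage)
    (h1 : X1 -> W1) (h2 : X2 -> W2) (h3 : X3 -> W3) (f g : W1 -> W2 -> W3 -> Y) :
  cont1 h1 -> cont1 h2 -> cont1 h3 -> homotopic3 u f g ->
  homotopic3 u (fun a b c => f (h1 a) (h2 b) (h3 c))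
               (fun a b c => g (h1 a) (h2 b) (h3 c)).
Proof.
move=> ch1 ch2 ch3 [m [H [cH [H0 H1]]]].
exists m, (fun a b c => H (h1 a) (h2 b) (h3 c)); split; [|split] => //.
apply: cont4_adjk => ka kb kc kt a a' b b' c c' t t' aa bb cc tt le_u.
by apply: adjk_adj (adjk_cont4 cH (adjk_cont1 ch1 aa) (adjk_cont1 ch2 bb)
  (adjk_cont1 ch3 cc) tt le_u).
Qed.

Lemma homotopic2_substr u (X1 X2 X3 B Z : dimage) (F : X2 -> X3 -> B)
    (p q : X1 -> B -> Z) :
  cont2 u F -> homotopic2 u p q ->
  homotopic3 u (fun a b c => p a (F b c)) (fun a b c => q a (F b c)).
Proof.
move=> cF [m [H [cH [H0 H1]]]].
exists m, (fun a b c => H a (F b c)); split; [|split] => //.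
apply: cont4_adjk => ka kb kc kt a a' b b' c c' t t' aa bb cc tt le_u.
by apply: adjk_adj (adjk_cont3 cH aa (adjk_cont2 cF bb cc _) tt _); lia.
Qed.

Lemma homotopic2_substl u (X1 X2 X3 A Z : dimage) (F : X1 -> X2 -> A)
    (p q : A -> X3 -> Z) :
  cont2 u F -> homotopic2 u p q ->
  homotopic3 u (fun a b c => p (F a b) c) (fun a b c => q (F a b) c).
Proof.
move=> cF [m [H [cH [H0 H1]]]].
exists m, (fun a b c => H (F a b) c); split; [|split] => //.
apply: cont4_adjk => ka kb kc kt a a' b b' c c' t t' aa bb cc tt le_u.
by apply: adjk_adj (adjk_cont3 cH (adjk_cont2 cF aa bb _) cc tt _); lia.
Qed.

Lemma homotopic2_whiskerr u (X1 X2 X3 W C Z : dimage) (M : W -> C -> Z)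
    (h : X1 -> W) (p q : X2 -> X3 -> C) :
  cont2 u M -> cont1 h -> homotopic2 u p q ->
  homotopic3 u (fun a b c => M (h a) (p b c)) (fun a b c => M (h a) (q b c)).
Proof.
move=> cM ch [m [H [cH [H0 H1]]]].
exists m, (fun a b c t => M (h a) (H b c t)); split; [|split].
- apply: cont4_adjk => ka kb kc kt a a' b b' c c' t t' aa bb cc tt le_u.
  apply: adjk_adj (adjk_cont2 cM (adjk_cont1 ch aa) (adjk_cont3 cH bb cc tt _) _);
    lia.
- by move=> a b c; rewrite H0.
- by move=> a b c; rewrite H1.
Qed.

Lemma homotopic2_whiskerl u (X1 X2 X3 W C Z : dimage) (M : C -> W -> Z)
    (h : X3 -> W) (p q : X1 -> X2 -> C) :
  cont2 u M -> cont1 h -> homotopic2 u p q ->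
  homotopic3 u (fun a b c => M (p a b) (h c)) (fun a b c => M (q a b) (h c)).
Proof.
move=> cM ch [m [H [cH [H0 H1]]]].
exists m, (fun a b c t => M (H a b t) (h c)); split; [|split].
- apply: cont4_adjk => ka kb kc kt a a' b b' c c' t t' aa bb cc tt le_u.
  apply: adjk_adj (adjk_cont2 cM (adjk_cont3 cH aa bb tt _) (adjk_cont1 ch cc) _);
    lia.
- by move=> a b c; rewrite H0.
- by move=> a b c; rewrite H1.
Qed.

Theorem mainTheorem4 (i : nat) (Hi : (i == 1) || (i == 2))
  (X : dimage) (eX : X) (muX : X -> X -> X)
  (Y : dimage) (eY : Y) (muY : Y -> Y -> Y) :
  HSpace i eX muX -> HSpace i eY muY ->
  HEquiv i eX muX eY muY ->
  hassoc i muX -> hassoc i muY.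
Proof.
move=> [cX _ _] [cY _ _] [f [g [cf [cg [_ [_ [fg [_ [_ g_mu]]]]]]]]] assocX.
apply: homotopic3_trans
  (homotopic3_sym (homotopic1_comp3 (cont3_comp_r cY cY) fg)) _.
apply: homotopic3_trans (homotopic3_comp cf (homotopic2_substr cY g_mu)) _.
apply: homotopic3_trans (homotopic3_comp cf (homotopic2_whiskerr cX cg g_mu)) _.
apply: homotopic3_trans
  (homotopic3_comp cf (homotopic3_precomp cg cg cg assocX)) _.
apply: homotopic3_trans
  (homotopic3_sym (homotopic3_comp cf (homotopic2_whiskerl cX cg g_mu))) _.
apply: homotopic3_trans
  (homotopic3_sym (homotopic3_comp cf (homotopic2_substl cY g_mu))) _.
exact: homotopic1_comp3 (cont3_comp_l cY cY) fg.
Qed.
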